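(* Under the standing assumptions below, define for each $j\in[d]$ and $c\in\mathbb{R}$ \[ \omega_j(c)=\begin{cases} 0, & c\le -\frac{n}{\sqrt{n+1}},\\[0.3em] \max\Big\{0,\ \hat\mu_j-\hat\sigma_j|c|\sqrt{\frac{(n+1)^2}{n^2-(n+1)c^2}}\Big\}, & -\frac{n}{\sqrt{n+1}}<c<0,\\[0.3em] \hat\mu_j+\hat\sigma_j|c|\sqrt{\frac{(n+1)^2}{n^2-(n+1)c^2}}, & 0\le c<\frac{n}{\sqrt{n+1}},\\[0.3em] +\infty, & c\ge \frac{n}{\sqrt{n+1}}. \end{cases} \] Then each $\omega_j:\mathbb{R}\to[0,\infty]$ is monotonically nondecreasing, and almost surely, for every $c\in\mathbb{R}$, \[ S^{n+1}_{\mathrm{oracle}}\le c\iff 0\le E^{n+1}_j\le \omega_j(c)\ \text{ for all } j\in[d]. \]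
   Context: Setting: $n\ge 2$ and $d\ge 1$ are integers, $[m]:=\{1,\dots,m\}$. $E^1,\dots,E^{n+1}$ are random vectors in $\mathbb{R}^d$ (residual vectors; $E^i=(E^i_1,\dots,E^i_d)$), assumed exchangeable. Assumption A: for each $j\in[d]$, the distribution of $E^i_j$ has no point masses, $E^i_j\ge 0$ almost surely, $\mathbb{E}[E^i_j]<\infty$ and $0<\mathrm{Var}(E^i_j)<\infty$; moreover, for each $j$, the values $E^1_j,\dots,E^{n+1}_j$ are almost surely pairwise distinct. Calibration statistics: $\hat\mu_j=\frac1n\sum_{i=1}^n E^i_j$ and $\hat\sigma_j=\sqrt{\frac1n\sum_{i=1}^n(E^i_j-\hat\mu_j)^2}$. Oracle statistics: $\hat\mu^{\mathrm{oracle}}_j=\frac1{n+1}\sum_{i=1}^{n+1}E^i_j$ and $\hat\sigma^{\mathrm{oracle}}_j=\sqrt{\frac1n\sum_{i=1}^{n+1}(E^i_j-\hat\mu^{\mathrm{oracle}}_j)^2}$. For $t\in\mathbb{R}^d_+$ and $\mu,\sigma\in\mathbb{R}^d$ with $\sigma_j>0$, $\Phi(t;\mu,\sigma):=\max_{1\le j\le d}\frac{t_j-\mu_j}{\sigma_j}$. Oracle scores: $S^i_{\mathrm{oracle}}:=\Phi(E^i;\hat\mu^{\mathrm{oracle}},\hat\sigma^{\mathrm{oracle}})$ for $i\in[n+1]$. *)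

From HB Require Import structures.
From mathcomp Require Import all_boot all_order all_algebra all_fingroup.
From mathcomp Require Import all_classical all_reals all_analysis.
Set Implicit Arguments. Unset Strict Implicit. Unset Printing Implicit Defensive.
Import Order.TTheory GRing.Theory Num.Theory.
Local Open Scope classical_set_scope.
Local Open Scope ring_scope.

(* A realization of the residuals: e i j = E^{i+1}_{j+1}, i : 'I_(n+1), j : 'I_d.
   The test point E^{n+1} is index ord_max; calibration points are i < n. *)
Section Stats.
Variables (R : realType) (n d : nat).
Implicit Types (e : 'I_n.+1 -> 'I_d -> R).

Definition mu_hat e (j : 'I_d) : R :=
  n%:R^-1 * \sum_(i < n.+1 | (i < n)%N) e i j.
Definition sigma_hat e (j : 'I_d) : R :=
  Num.sqrt (n%:R^-1 * \sum_(i < n.+1 | (i < n)%N) (e i j - mu_hat e j) ^+ 2).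
Definition mu_oracle e (j : 'I_d) : R :=
  (n.+1)%:R^-1 * \sum_(i < n.+1) e i j.
Definition sigma_oracle e (j : 'I_d) : R :=
  Num.sqrt (n%:R^-1 * \sum_(i < n.+1) (e i j - mu_oracle e j) ^+ 2).

(* Phi(t; mu, sigma) = max_j (t_j - mu_j)/sigma_j, as an extended real
   (the max over the nonempty index set [d], d >= 1, is finite). *)
Definition Phi (t mu sigma : 'I_d -> R) : \bar R :=
  \big[Order.max/-oo%E]_(j < d) (((t j - mu j) / sigma j)%:E).

Definition S_oracle e (i : 'I_n.+1) : \bar R :=
  Phi (e i) (mu_oracle e) (sigma_oracle e).

Definition omega e (j : 'I_d) (c : R) : \bar R :=
  let thr := n%:R / Num.sqrt (n.+1)%:R in
  let g := `|c| * Num.sqrt ((n.+1)%:R ^+ 2 / (n%:R ^+ 2 - (n.+1)%:R * c ^+ 2)) in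
  if c <= - thr then 0%E
  else if c < 0 then (Num.max 0 (mu_hat e j - sigma_hat e j * g))%:E
  else if c < thr then (mu_hat e j + sigma_hat e j * g)%:E
  else +oo%E.
End Stats.

(* Equality is required on all
   measurable rectangles, a pi-system generating the product sigma-algebra,
   hence this is equality of joint laws. *)
Definition exchangeable d0 (T : measurableType d0) (R : realType)
  (P : probability T R) (n d : nat) (E : 'I_n.+1 -> 'I_d -> T -> R) : Prop :=
  forall (s : {perm 'I_n.+1}) (B : 'I_n.+1 -> 'I_d -> set R),
    (forall i j, measurable (B i j)) ->
    P [set t | forall i j, B i j (E i j t)] =
    P [set t | forall i j, B i j (E (s i) j t)].

(* Adding the test point x = E^{n+1}_j to the calibration sample updates the
   statistics by  x - mu_oracle = n/(n+1) (x - mu_hat)  and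
   sigma_oracle^2 = sigma_hat^2 + (x - mu_hat)^2/(n+1),  so the j-th coordinate
   of the oracle score is the function
     a |-> (n/(n+1)) a / sqrt(sigma_hat^2 + a^2/(n+1))
   of a = x - mu_hat.  This function is a strictly increasing bijection of R onto
   (-n/sqrt(n+1), n/sqrt(n+1)), and omega_j(c) - mu_hat is its inverse (clipped so
   that omega_j >= 0).  Hence for x > 0 the bound "score <= c" is equivalent to
   "x <= omega_j(c)", and monotonicity of omega_j follows from this equivalence.
   The probabilistic hypotheses only serve to make, almost surely, every x > 0
   (no atoms) and every sigma_hat > 0 (two distinct calibration values). *)

From HB Require Import structures.
From mathcomp Require Import all_boot all_order all_algebra all_fingroup.
From mathcomp Require Import all_classical all_reals all_analysis.
From mathcomp Require Import ring lra.
Set Implicit Arguments. Unset Strict Implicit. Unset Printing Implicit Defensive.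
Import Order.TTheory GRing.Theory Num.Theory.
Local Open Scope classical_set_scope.
Local Open Scope ring_scope.

Lemma ge0_lee_from_pos (R : realDomainType) (u v : \bar R) : (0 <= v)%E ->
  (forall x : R, 0 < x -> (x%:E <= u)%E -> (x%:E <= v)%E) -> (u <= v)%E.
Proof.
case: v => [r | _ _ | //]; last by rewrite leey.
rewrite lee_fin => r_ge0 uv; rewrite leNgt; apply/negP.
case: u uv => [a | | //] uv.
  rewrite lte_fin => ra; have := uv a (le_lt_trans r_ge0 ra) (lexx _).
  by rewrite lee_fin leNgt ra.
have := uv (r + 1) (ltr_wpDl r_ge0 ltr01) (leey _).
by rewrite lee_fin gerDl ler10.
Qed.

Section ScoreInversion.
Variable R : rcfType.
Variables (N M s : R).
Hypotheses (N_gt0 : 0 < N) (M_gt0 : 0 < M) (s_gt0 : 0 < s).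

Definition spread (a : R) : R := Num.sqrt (s ^+ 2 + a ^+ 2 / M).

Lemma spread_radicand_gt0 a : 0 < s ^+ 2 + a ^+ 2 / M.
Proof. by rewrite ltr_wpDr ?exprn_gt0 // divr_ge0 ?sqr_ge0 ?ltW. Qed.

Lemma spread_gt0 a : 0 < spread a.
Proof. by rewrite sqrtr_gt0 spread_radicand_gt0. Qed.

Lemma sqr_spread a : M * spread a ^+ 2 = M * s ^+ 2 + a ^+ 2.
Proof.
rewrite sqr_sqrtr ?(ltW (spread_radicand_gt0 a)) //.
by field; rewrite gt_eqF.
Qed.

Lemma mul_spread_lt a b : a < b -> a * spread b < b * spread a.
Proof.
move=> ab; have qa_gt0 := spread_gt0 a; have qb_gt0 := spread_gt0 b.
have sqr_gap : (a * spread b) ^+ 2 - (b * spread a) ^+ 2 = s ^+ 2 * (a ^+ 2 - b ^+ 2).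
  apply: (mulfI (lt0r_neq0 M_gt0)).
  transitivity (a ^+ 2 * (M * spread b ^+ 2) - b ^+ 2 * (M * spread a ^+ 2)); first by ring.
  by rewrite !sqr_spread; ring.
have s2_gt0 : 0 < s ^+ 2 by rewrite exprn_gt0.
have [a_ge0|a_lt0] := lerP 0 a.
  have b_gt0 : 0 < b by apply: le_lt_trans ab.
  have : a ^+ 2 < b ^+ 2 by rewrite ltr_sqr // nnegrE ltW.
  have : 0 <= a * spread b by rewrite mulr_ge0 // ltW.
  have : 0 <= b * spread a by rewrite mulr_ge0 // ltW.
  nra.
have [b_le0|b_gt0] := lerP b 0; last first.
  by apply: (@lt_trans _ _ 0); [rewrite pmulr_llt0 | rewrite mulr_gt0].
have : b ^+ 2 < a ^+ 2.
  by rewrite -sqrrN -[a ^+ 2]sqrrN ltr_sqr ?ltrN2 // nnegrE oppr_ge0 // ltW.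
have : a * spread b < 0 by rewrite pmulr_llt0.
have : b * spread a <= 0 by rewrite pmulr_lle0.
nra.
Qed.

Definition test_score (a : R) : R := N / M * a / spread a.

Definition score_bound : R := N / Num.sqrt M.

Definition score_dev (c : R) : R :=
  s * (c * Num.sqrt (M ^+ 2 / (N ^+ 2 - M * c ^+ 2))).

Lemma test_score_mono : {mono test_score : a b / a <= b}.
Proof.
apply: le_mono => a b ab.
rewrite /test_score -!(mulrA (N / M)) ltr_pM2l ?divr_gt0 //.
rewrite ltr_pdivrMr ?spread_gt0 // mulrAC ltr_pdivlMr ?spread_gt0 //.
exact: mul_spread_lt.
Qed.

Lemma test_score_bound a : - score_bound < test_score a < score_bound.
Proof.
have NM0 : 0 < N / M by rewrite divr_gt0.
have sM0 : 0 < Num.sqrt M by rewrite sqrtr_gt0.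
rewrite -ltr_norml /test_score normrM normfV (gtr0_norm (spread_gt0 a)) normrM (gtr0_norm NM0).
rewrite ltr_pdivrMr ?spread_gt0 // -ltr_sqr ?nnegrE /=; first last.
- by rewrite mulr_ge0 ?divr_ge0 ?(ltW sM0) ?(ltW N_gt0) ?(ltW (spread_gt0 a)).
- by rewrite mulr_ge0 ?(ltW NM0).
have -> : (score_bound * spread a) ^+ 2 = (N / M) ^+ 2 * (M * spread a ^+ 2).
  by rewrite /score_bound !exprMn !exprVn sqr_sqrtr ?ltW //; field; rewrite gt_eqF.
rewrite sqr_spread exprMn real_normK ?num_real // ltr_pM2l ?exprn_gt0 //.
by rewrite ltrDr mulr_gt0 ?exprn_gt0.
Qed.

Lemma score_bound_gap (c : R) : - score_bound < c < score_bound -> 0 < N ^+ 2 - M * c ^+ 2.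
Proof.
rewrite -ltr_norml -ltr_sqr ?nnegrE ?normr_ge0 ?divr_ge0 ?sqrtr_ge0 ?(ltW N_gt0) //=.
rewrite real_normK ?num_real // /score_bound expr_div_n sqr_sqrtr ?(ltW M_gt0) //.
by rewrite ltr_pdivlMr // subr_gt0 mulrC.
Qed.

Lemma score_devK (c : R) : - score_bound < c < score_bound -> test_score (score_dev c) = c.
Proof.
rewrite /score_dev => /score_bound_gap; set D := N ^+ 2 - M * c ^+ 2 => D0.
have sD0 : 0 < Num.sqrt D by rewrite sqrtr_gt0.
have -> : Num.sqrt (M ^+ 2 / D) = M / Num.sqrt D.
  by rewrite sqrtrM ?sqr_ge0 // sqrtr_sqr gtr0_norm // sqrtrV // ltW.
rewrite /test_score.
have -> : spread (s * (c * (M / Num.sqrt D))) = s * N / Num.sqrt D.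
  rewrite /spread -[s * N / _]gtr0_norm ?divr_gt0 ?mulr_gt0 // -sqrtr_sqr.
  congr Num.sqrt; rewrite !exprMn !exprVn sqr_sqrtr ?(ltW D0) // /D.
  by field; rewrite ?gt_eqF.
field.
by rewrite !gt_eqF.
Qed.

Lemma test_score_le (c a : R) : - score_bound < c < score_bound ->
  (test_score a <= c) = (a <= score_dev c).
Proof. by move=> /score_devK {1}<-; rewrite test_score_mono. Qed.

Definition score_threshold (mh c : R) : \bar R :=
  let g := `|c| * Num.sqrt (M ^+ 2 / (N ^+ 2 - M * c ^+ 2)) in
  if c <= - score_bound then 0%E
  else if c < 0 then (Num.max 0 (mh - s * g))%:E
  else if c < score_bound then (mh + s * g)%:E
  else +oo%E.

Lemma lee_score_threshold (mh x c : R) : 0 < x ->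
  (x%:E <= score_threshold mh c)%E = (test_score (x - mh) <= c).
Proof.
move=> x_gt0; have /andP[lo hi] := test_score_bound (x - mh).
have sb_gt0 : 0 < score_bound by rewrite divr_gt0 ?sqrtr_gt0.
rewrite /score_threshold; case: ifPn => [c_lo | ].
  by rewrite lee_fin !leNgt x_gt0 (le_lt_trans c_lo lo).
rewrite -ltNge => c_lo; case: ifPn => [c_lt0 | ].
  rewrite lee_fin le_max leNgt x_gt0 /= ltr0_norm // test_score_le ?c_lo ?(lt_trans c_lt0) //.
  by rewrite /score_dev mulNr mulrN opprK [in RHS]lerBlDl.
rewrite -leNgt => c_ge0; case: ifPn => [c_hi | ].
  by rewrite lee_fin ger0_norm // test_score_le ?c_lo ?c_hi // /score_dev [in RHS]lerBlDl.
by rewrite -leNgt leey => /(le_trans (ltW hi)) ->.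
Qed.

Lemma score_threshold_ge0 (mh c : R) : 0 <= mh -> (0 <= score_threshold mh c)%E.
Proof.
move=> mh_ge0; rewrite /score_threshold.
case: ifP => _ //; case: ifP => _; first by rewrite lee_fin le_max lexx.
case: ifP => _ //; rewrite lee_fin addr_ge0 // mulr_ge0 ?mulr_ge0 ?sqrtr_ge0 //.
exact: ltW.
Qed.

Lemma score_threshold_homo (mh : R) : 0 <= mh ->
  {homo score_threshold mh : c c' / c <= c' >-> (c <= c')%E}.
Proof.
move=> mh_ge0 c c' cc'; apply: ge0_lee_from_pos => [|x x_gt0].
  exact: score_threshold_ge0.
by rewrite !lee_score_threshold // => /le_trans; apply.
Qed.
End ScoreInversion.

Section MeanUpdate.
Variable R : numFieldType.
Variables (n : nat) (w : 'I_n -> R) (x : R).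
Hypothesis n_gt0 : (0 < n)%N.

Let m := n%:R^-1 * \sum_i w i.
Let m' := n.+1%:R^-1 * (\sum_i w i + x).

Let n_neq0 : n%:R != 0 :> R. Proof. by rewrite pnatr_eq0 -lt0n. Qed.
Let n1_neq0 : n%:R + 1 != 0 :> R. Proof. by rewrite natr1 pnatr_eq0. Qed.

Lemma mean_snoc_dev : x - m' = n%:R / n.+1%:R * (x - m).
Proof. by rewrite /m /m' -natr1; field; rewrite n_neq0 n1_neq0. Qed.

Lemma sum_dev_mean : \sum_i (w i - m) = 0.
Proof.
by rewrite sumrB sumr_const card_ord /m -mulr_natr; field; rewrite n_neq0.
Qed.

Lemma sum_sqr_dev_snoc :
  \sum_i (w i - m') ^+ 2 + (x - m') ^+ 2 =
  \sum_i (w i - m) ^+ 2 + n%:R / n.+1%:R * (x - m) ^+ 2.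
Proof.
have shift i : (w i - m') ^+ 2 = (w i - m) ^+ 2 + 2 * (m - m') * (w i - m) + (m - m') ^+ 2.
  by ring.
rewrite (eq_bigr _ (fun i _ => shift i)) !big_split /= -mulr_sumr sum_dev_mean.
rewrite mulr0 addr0 sumr_const card_ord -addrA; congr (_ + _).
by rewrite /m /m' -mulr_natr -natr1; field; rewrite n_neq0 n1_neq0.
Qed.

End MeanUpdate.

Section OracleScore.
Variables (R : realType) (n d : nat) (e : 'I_n.+1 -> 'I_d -> R).

Let calib (j : 'I_d) (i : 'I_n) : R := e (widen_ord (leqnSn n) i) j.

Let mu_hatE j : mu_hat e j = n%:R^-1 * \sum_i calib j i.
Proof. by rewrite /mu_hat (big_ord_narrow (leqnSn n)). Qed.

Let sigma_hatE j :
  sigma_hat e j = Num.sqrt (n%:R^-1 * \sum_i (calib j i - mu_hat e j) ^+ 2).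
Proof. by rewrite /sigma_hat (big_ord_narrow (leqnSn n)). Qed.

Lemma mu_hat_ge0 j : (forall i, 0 <= e i j) -> 0 <= mu_hat e j.
Proof.
by move=> e_ge0; rewrite /mu_hat mulr_ge0 ?invr_ge0 ?ler0n ?sumr_ge0.
Qed.

Lemma sigma_hat_gt0 j (i k : 'I_n.+1) : (i < n)%N -> (k < n)%N ->
  e i j != e k j -> 0 < sigma_hat e j.
Proof.
move=> i_lt k_lt; apply: contraNT => sigma_le0.
have n_gt0 : (0 < n)%N by apply: leq_ltn_trans i_lt.
have sum0 : \sum_l (calib j l - mu_hat e j) ^+ 2 = 0.
  apply/eqP; rewrite eq_le sumr_ge0 ?andbT => [|l _]; last exact: sqr_ge0.
  move: sigma_le0; rewrite sigma_hatE sqrtr_gt0 -leNgt.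
  by rewrite pmulr_rle0 ?invr_gt0 ?ltr0n.
have dev0 := psumr_eq0P (fun l _ => sqr_ge0 (calib j l - mu_hat e j)) sum0.
have calibE (l : 'I_n.+1) (l_lt : (l < n)%N) : e l j = mu_hat e j.
  apply/eqP; rewrite -subr_eq0 -sqrf_eq0.
  have -> : l = widen_ord (leqnSn n) (Ordinal l_lt) by exact: val_inj.
  by rewrite [_ ^+ 2](dev0 _ isT).
by rewrite calibE // calibE.
Qed.

Lemma oracle_test_score (j : 'I_d) : (0 < n)%N ->
  (e ord_max j - mu_oracle e j) / sigma_oracle e j =
  test_score n%:R n.+1%:R (sigma_hat e j) (e ord_max j - mu_hat e j).
Proof.
move=> n_gt0.
have n_neq0 : n%:R != 0 :> R by rewrite pnatr_eq0 -lt0n.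
have mu_oE : mu_oracle e j = n.+1%:R^-1 * (\sum_i calib j i + e ord_max j).
  by rewrite /mu_oracle big_ord_recr.
rewrite /test_score /spread /sigma_oracle big_ord_recr /= mu_oE.
rewrite (sum_sqr_dev_snoc (calib j)) // -mu_hatE mean_snoc_dev // -mu_hatE.
congr (_ / Num.sqrt _); rewrite sigma_hatE sqr_sqrtr; last first.
  by rewrite mulr_ge0 ?invr_ge0 ?ler0n ?sumr_ge0 // => i _; exact: sqr_ge0.
by rewrite mulrDr (mulrA n%:R^-1) (mulKf n_neq0) [n.+1%:R^-1 * _]mulrC.
Qed.

Lemma oracle_score_le_omega : (0 < n)%N ->
  (forall i j, 0 <= e i j) -> (forall j, e ord_max j != 0) ->
  (forall j, 0 < sigma_hat e j) ->
  (forall j, {homo omega e j : c c' / c <= c' >-> (c <= c')%E}) /\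
  (forall c : R, (S_oracle e ord_max <= c%:E)%E <->
     (forall j, 0 <= e ord_max j /\ ((e ord_max j)%:E <= omega e j c)%E)).
Proof.
move=> n_gt0 e_ge0 test_neq0 sigma_gt0.
have N_gt0 : 0 < n%:R :> R by rewrite ltr0n.
have M_gt0 : 0 < n.+1%:R :> R by rewrite ltr0n.
have omegaE j : omega e j = score_threshold n%:R n.+1%:R (sigma_hat e j) (mu_hat e j).
  by [].
have test_gt0 j : 0 < e ord_max j by rewrite lt_def test_neq0 e_ge0.
have omega_scoreE j c : ((e ord_max j)%:E <= omega e j c)%E =
    ((e ord_max j - mu_oracle e j) / sigma_oracle e j <= c).
  by rewrite omegaE (lee_score_threshold N_gt0 M_gt0) // oracle_test_score.
split => [j | c].
  by rewrite omegaE; apply: score_threshold_homo => //; apply: mu_hat_ge0.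
split => [/bigmax_leP[_ le_c] j | le_omega].
  by split; [exact: e_ge0 | rewrite omega_scoreE -lee_fin le_c].
apply/bigmax_leP; split => [|j _]; first exact: leNye.
by rewrite lee_fin -omega_scoreE; case: (le_omega j).
Qed.
End OracleScore.

Lemma ae_neq_of_null_level d0 (T : measurableType d0) (R : realType)
  (mu : {measure set T -> \bar R}) (f : T -> R) (x : R) :
  measurable_fun setT f -> mu [set t | f t = x] = 0%E -> {ae mu, forall t, f t != x}.
Proof.
move=> f_mble level0; exists [set t | f t = x]; split => //.
  by have := f_mble measurableT [set x] (measurable_set1 x); rewrite setTI.
by move=> t /= /negP; rewrite negbK => /eqP.
Qed.

Theorem lemma1 (R : realType) (d0 : measure_display) (T : measurableType d0)
  (P : probability T R) (n d : nat) (E : 'I_n.+1 -> 'I_d -> T -> R) :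
  (2 <= n)%N -> (1 <= d)%N ->
  (forall i j, measurable_fun setT (E i j)) ->
  exchangeable P E ->
  (* Assumption A *)
  (forall i j (x : R), P [set t | E i j t = x] = 0%E) ->
  (forall i j, {ae P, forall t, 0 <= E i j t}) ->
  (forall i j, E i j \in Lfun P 1%:E) ->
  (forall i j, E i j \in Lfun P 2%:E) ->
  (forall i j, (0 < 'V_P[E i j])%E) ->
  (forall j, {ae P, forall t, forall i i' : 'I_n.+1, i != i' -> E i j t != E i' j t}) ->
  {ae P, forall t,
     let e := fun i j => E i j t in
     (forall j, {homo omega e j : c c' / c <= c' >-> (c <= c')%E}) /\
     (forall c : R,
        (S_oracle e ord_max <= c%:E)%E <->
        (forall j, 0 <= e ord_max j /\ ((e ord_max j)%:E <= omega e j c)%E))}.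
Proof.
move=> n_ge2 _ E_mble _ no_atom E_ge0 _ _ _ E_distinct.
have ae_ge0 : {ae P, forall t i j, 0 <= E i j t}.
  by apply: filter_forall => i; apply: filter_forall.
have ae_test_neq0 : {ae P, forall t j, E ord_max j t != 0}.
  by apply: filter_forall => j; exact: ae_neq_of_null_level (E_mble _ _) (no_atom _ _ _).
have ae_distinct : {ae P, forall t j (i i' : 'I_n.+1), i != i' -> E i j t != E i' j t}.
  exact: filter_forall.
have n_gt0 : (0 < n)%N by apply: ltnW.
have inord1E : (inord 1 : 'I_n.+1) = 1 :> nat by rewrite inordK.
have calib01 : (ord0 : 'I_n.+1) != inord 1 by rewrite -val_eqE /= inord1E.
near=> t; apply: oracle_score_le_omega => //.
- exact: (near ae_ge0 t).
- exact: (near ae_test_neq0 t).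
- move=> j; apply: (sigma_hat_gt0 (i := ord0) (k := inord 1)) => //.
    by rewrite inord1E.
  exact: (near ae_distinct t).
Unshelve. all: by end_near.
Qed.
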